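(* For every $n\ge1$, the unimodal spi-logic $\mathsf{SPi}+\{\iota^n_{fun}\}$ is complete.
   Context: Unimodal setting: one diamond $\Diamond$. Sp-formulas: built from propositional variables and $\top$ by $\wedge$ and $\Diamond$; sp-implications $\sigma\to\tau$. A SLO is an algebra $(A,\wedge,\top,\Diamond)$ with $(A,\wedge,\top)$ a meet-semilattice with top and $\Diamond$ monotone; it validates $\sigma\to\tau$ if $\sigma[\mathfrak a]\le\tau[\mathfrak a]$ for all valuations. Frames $(W,R)$ with standard Kripke semantics. $\Sigma\models_{\mathsf{Kr}}\iota$ (resp. $\models_{\mathsf{SLO}}$): $\iota$ valid in every frame (resp. SLO) validating $\Sigma$. The spi-logic $\mathsf{SPi}+\Sigma$ is complete if $\Sigma\models_{\mathsf{Kr}}\iota\iff\Sigma\models_{\mathsf{SLO}}\iota$ for every sp-implication $\iota$. For $P=\{p_0,\dots,p_n\}$, $\iota^n_{fun}=\big(\bigwedge_{Q\subseteq P,|Q|=n}\Diamond\bigwedge Q\to\Diamond\bigwedge P\big)$. *)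

From Stdlib Require Import List Arith.
Import ListNotations.

Inductive spf : Type :=
| Var : nat -> spf
| Top : spf
| And : spf -> spf -> spf
| Dia : spf -> spf.

Record spi : Type := Imp { ante : spf; cons : spf }.

Record frame : Type := { world : Type; rel : world -> world -> Prop }.

Fixpoint ksat (F : frame) (V : nat -> world F -> Prop) (w : world F) (f : spf) : Prop :=
  match f with
  | Var k => V k w
  | Top => True
  | And a b => ksat F V w a /\ ksat F V w b
  | Dia a => exists v, rel F w v /\ ksat F V v a
  end.

Definition frame_valid (F : frame) (i : spi) : Prop :=
  forall (V : nat -> world F -> Prop) (w : world F),
    ksat F V w (ante i) -> ksat F V w (cons i).

Definition Kr_conseq (Sigma : spi -> Prop) (i : spi) : Prop :=
  forall F : frame, (forall s, Sigma s -> frame_valid F s) -> frame_valid F i.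

Record SLO : Type := {
  car : Type;
  meet : car -> car -> car;
  stop : car;
  sdia : car -> car;
  meet_assoc : forall a b c, meet a (meet b c) = meet (meet a b) c;
  meet_comm : forall a b, meet a b = meet b a;
  meet_idem : forall a, meet a a = a;
  meet_top : forall a, meet a stop = a;
  (* order of the semilattice: a <= b iff a /\ b = a *)
  sdia_mono : forall a b, meet a b = a -> meet (sdia a) (sdia b) = sdia a
}.

Definition sle (A : SLO) (a b : car A) : Prop := meet A a b = a.

Fixpoint aeval (A : SLO) (v : nat -> car A) (f : spf) : car A :=
  match f with
  | Var k => v k
  | Top => stop A
  | And a b => meet A (aeval A v a) (aeval A v b)
  | Dia a => sdia A (aeval A v a)
  end.

Definition slo_valid (A : SLO) (i : spi) : Prop :=
  forall v : nat -> car A, sle A (aeval A v (ante i)) (aeval A v (cons i)).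

Definition SLO_conseq (Sigma : spi -> Prop) (i : spi) : Prop :=
  forall A : SLO, (forall s, Sigma s -> slo_valid A s) -> slo_valid A i.

Definition spi_complete (Sigma : spi -> Prop) : Prop :=
  forall i : spi, Kr_conseq Sigma i <-> SLO_conseq Sigma i.

Fixpoint bigAnd (l : list spf) : spf :=
  match l with
  | [] => Top
  | [x] => x
  | x :: xs => And x (bigAnd xs)
  end.

(* P = {p_0,...,p_n}; the n-element subsets of P are P \ {p_i}, i = 0..n *)
Definition P_vars (n : nat) : list spf := map Var (seq 0 (S n)).

Definition Q_minus (n i : nat) : list spf :=
  map Var (filter (fun j => negb (Nat.eqb j i)) (seq 0 (S n))).

Definition iota_fun (n : nat) : spi :=
  Imp (bigAnd (map (fun i => Dia (bigAnd (Q_minus n i))) (seq 0 (S n))))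
      (Dia (bigAnd (P_vars n))).

From Pilot Require Import Defs.
From Stdlib Require Import List Arith Lia Classical ClassicalEpsilon
  FunctionalExtensionality PropExtensionality.
Import ListNotations.

(* Complex algebras give one direction: the powerset algebra of a frame validates exactly
   the sp-implications valid in the frame.

   For the other, call a formula normal if every diamond in it is applied to a conjunction
   of at most n normal formulas.  In an SLO validating iota^n_fun, the diamond of a longer
   conjunction c_1 /\ ... /\ c_m lies above the meet of the diamond of c_1 /\ ... /\ c_n
   and the diamonds of the n conjunctions of length m - 1 obtained by dropping one of
   c_1, ..., c_n.  Iterating, every formula tau lies above the meet of finitely many normal
   formulas, each implied by tau in every frame.  A normal formula c has a canonical world,
   in a frame of out-degree at most n (hence validating iota^n_fun), which refutes c and
   refutes only formulas lying below c in every SLO.  If sigma -> tau is a Kripke consequence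
   of iota^n_fun, then sigma fails at the canonical world of each normal c below tau, since
   tau does; so sigma lies below every such c, and hence below tau. *)

Section Order.
Variable A : SLO.

Lemma sle_refl a : sle A a a.
Proof. apply meet_idem. Qed.

Lemma sle_trans a b c : sle A a b -> sle A b c -> sle A a c.
Proof. unfold sle; intros Hab Hbc. rewrite <- Hab, <- meet_assoc, Hbc. reflexivity. Qed.

Lemma sle_top a : sle A a (stop A).
Proof. apply meet_top. Qed.

Lemma sle_meet_l a b : sle A (meet A a b) a.
Proof. unfold sle. rewrite (meet_comm A _ a), meet_assoc, meet_idem. reflexivity. Qed.

Lemma sle_meet_r a b : sle A (meet A a b) b.
Proof. unfold sle. rewrite <- meet_assoc, meet_idem. reflexivity. Qed.

Lemma sle_meet y a b : sle A y (meet A a b) <-> sle A y a /\ sle A y b.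
Proof.
  split.
  - intros H; split; eapply sle_trans; eauto using sle_meet_l, sle_meet_r.
  - unfold sle; intros [Ha Hb]. rewrite meet_assoc, Ha, Hb. reflexivity.
Qed.

Lemma sle_dia a b : sle A a b -> sle A (sdia A a) (sdia A b).
Proof. apply sdia_mono. Qed.

Lemma sle_aeval_bigAnd v y l :
  sle A y (aeval A v (bigAnd l)) <-> (forall f, In f l -> sle A y (aeval A v f)).
Proof.
  induction l as [|f [|g l] IH].
  - split; [intros _ h []|intros _; apply sle_top].
  - split; [intros H h [<-|[]]; exact H|intros H; apply H; left; reflexivity].
  - change (sle A y (meet A (aeval A v f) (aeval A v (bigAnd (g :: l)))) <->
            forall h, In h (f :: g :: l) -> sle A y (aeval A v h)).
    rewrite sle_meet, IH. simpl; firstorder congruence.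
Qed.

End Order.

Lemma ksat_bigAnd F V w l :
  ksat F V w (bigAnd l) <-> (forall f, In f l -> ksat F V w f).
Proof.
  induction l as [|f [|g l] IH].
  - simpl; tauto.
  - simpl; firstorder congruence.
  - change (ksat F V w f /\ ksat F V w (bigAnd (g :: l)) <->
            forall h, In h (f :: g :: l) -> ksat F V w h).
    rewrite IH. simpl; firstorder congruence.
Qed.

Lemma in_Q_minus n i f : In f (Q_minus n i) <-> exists j, f = Var j /\ j <= n /\ j <> i.
Proof.
  unfold Q_minus. rewrite in_map_iff.
  setoid_rewrite filter_In; setoid_rewrite in_seq; setoid_rewrite Bool.negb_true_iff;
  setoid_rewrite Nat.eqb_neq. split.
  - intros (j & <- & Hj & Hji). exists j; repeat split; lia.
  - intros (j & -> & Hj & Hji). exists j; repeat split; lia.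
Qed.

Lemma in_P_vars n f : In f (P_vars n) <-> exists j, f = Var j /\ j <= n.
Proof.
  unfold P_vars. rewrite in_map_iff. setoid_rewrite in_seq. split.
  - intros (j & <- & Hj). exists j; split; [reflexivity|lia].
  - intros (j & -> & Hj). exists j; split; [reflexivity|lia].
Qed.

Lemma in_iota_fun_ante n f :
  In f (map (fun i => Dia (bigAnd (Q_minus n i))) (seq 0 (S n))) <->
  exists i, f = Dia (bigAnd (Q_minus n i)) /\ i <= n.
Proof.
  rewrite in_map_iff. setoid_rewrite in_seq. split.
  - intros (i & <- & Hi). exists i; split; [reflexivity|lia].
  - intros (i & -> & Hi). exists i; split; [reflexivity|lia].
Qed.

Lemma ksat_iota_fun_ante F V w n :
  ksat F V w (ante (iota_fun n)) <->
  forall i, i <= n -> exists u, rel F w u /\ forall j, j <= n -> j <> i -> V j u.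
Proof.
  cbn [ante iota_fun]. rewrite ksat_bigAnd. setoid_rewrite in_iota_fun_ante. split.
  - intros H i Hi. destruct (H _ (ex_intro _ i (conj eq_refl Hi))) as (u & Hwu & Hu).
    exists u; split; [exact Hwu|]. intros j Hj Hji.
    apply (proj1 (ksat_bigAnd _ _ _ _) Hu (Var j)), in_Q_minus. eauto.
  - intros H f (i & -> & Hi). destruct (H i Hi) as (u & Hwu & Hu).
    exists u; split; [exact Hwu|]. apply ksat_bigAnd.
    intros f Hf. apply in_Q_minus in Hf as (j & -> & Hj & Hji). exact (Hu j Hj Hji).
Qed.

Lemma ksat_iota_fun_cons F V w n :
  ksat F V w (Defs.cons (iota_fun n)) <-> exists u, rel F w u /\ forall j, j <= n -> V j u.
Proof.
  cbn [Defs.cons iota_fun ksat]. setoid_rewrite ksat_bigAnd. setoid_rewrite in_P_vars.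
  split; intros (u & Hwu & Hu); exists u; split; auto.
  - intros j Hj. exact (Hu (Var j) (ex_intro _ j (conj eq_refl Hj))).
  - intros f (j & -> & Hj). exact (Hu j Hj).
Qed.

Lemma frame_valid_iota_fun (F : frame) n :
  (forall w, exists succs, length succs <= n /\ forall u, rel F w u -> In u succs) ->
  frame_valid F (iota_fun n).
Proof.
  intros Hdeg V w. rewrite ksat_iota_fun_ante, ksat_iota_fun_cons. intros Hante.
  destruct (Hdeg w) as (succs & Hlen & Hsuccs).
  set (P i u := rel F w u /\ forall j, j <= n -> j <> i -> V j u).
  set (pick i := epsilon (inhabits w) (P i)).
  assert (Hpick : forall i, i <= n -> P i (pick i)) by (intros; apply epsilon_spec, Hante; auto).
  apply NNPP; intros Hnone.
  assert (Hnodup : NoDup (map pick (seq 0 (S n)))).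
  { apply NoDup_map_NoDup_ForallPairs; [|apply seq_NoDup].
    intros i j Hi Hj Hij. apply in_seq in Hi, Hj.
    destruct (Nat.eq_dec i j) as [|Hne]; [assumption|exfalso].
    apply Hnone. exists (pick i). split; [apply Hpick; lia|].
    (* a successor picked for two different indices satisfies every p_k *)
    intros k Hk. destruct (Nat.eq_dec k i) as [->|Hki].
    - rewrite Hij. apply Hpick; lia.
    - apply Hpick; lia. }
  apply NoDup_incl_length with (l' := succs) in Hnodup.
  - rewrite length_map, length_seq in Hnodup. lia.
  - intros u Hu. apply in_map_iff in Hu as (i & <- & Hi). apply in_seq in Hi.
    apply Hsuccs, Hpick. lia.
Qed.

Lemma iota_fun_sle_dia (A : SLO) n (a w : nat -> car A) y z :
  slo_valid A (iota_fun n) ->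
  (forall i, i <= n -> sle A y (sdia A (w i))) ->
  (forall i j, i <= n -> j <= n -> i <> j -> sle A (w i) (a j)) ->
  (forall u, (forall j, j <= n -> sle A u (a j)) -> sle A u z) ->
  sle A y (sdia A z).
Proof.
  intros Hax Hy Hw Hz. specialize (Hax a). cbn [ante Defs.cons iota_fun aeval] in Hax.
  eapply sle_trans; [eapply sle_trans; [|exact Hax]|apply sle_dia, Hz].
  - apply sle_aeval_bigAnd. intros f Hf. apply in_iota_fun_ante in Hf as (i & -> & Hi).
    eapply sle_trans; [apply (Hy i Hi)|]. apply sle_dia, sle_aeval_bigAnd.
    intros f Hf. apply in_Q_minus in Hf as (j & -> & Hj & Hji). apply Hw; auto.
  - intros j Hj. apply (proj1 (sle_aeval_bigAnd _ _ _ _) (sle_refl _ _) (Var j)).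
    apply in_P_vars. eauto.
Qed.

Inductive clause : Type :=
| CVar (k : nat)
| CDia (l : list clause).

Fixpoint clause_spf (c : clause) : spf :=
  match c with
  | CVar k => Var k
  | CDia l => Dia (bigAnd (map clause_spf l))
  end.

Definition conj_spf (l : list clause) : spf := bigAnd (map clause_spf l).

Inductive normal (n : nat) : clause -> Prop :=
| normal_CVar k : normal n (CVar k)
| normal_CDia l : length l <= n -> (forall c, In c l -> normal n c) -> normal n (CDia l).

Lemma ksat_conj_spf F V w l :
  ksat F V w (conj_spf l) <-> (forall c, In c l -> ksat F V w (clause_spf c)).
Proof.
  unfold conj_spf. rewrite ksat_bigAnd. setoid_rewrite in_map_iff.
  firstorder (subst; eauto).
Qed.

Lemma sle_aeval_conj_spf A v y l :
  sle A y (aeval A v (conj_spf l)) <-> (forall c, In c l -> sle A y (aeval A v (clause_spf c))).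
Proof.
  unfold conj_spf. rewrite sle_aeval_bigAnd. setoid_rewrite in_map_iff.
  firstorder (subst; eauto).
Qed.

Lemma ksat_conj_spf_incl F V w l l' :
  incl l l' -> ksat F V w (conj_spf l') -> ksat F V w (conj_spf l).
Proof. rewrite !ksat_conj_spf. auto. Qed.

Lemma sle_conj_spf_incl A v l l' :
  incl l l' -> sle A (aeval A v (conj_spf l')) (aeval A v (conj_spf l)).
Proof.
  intros Hl. apply sle_aeval_conj_spf. intros c Hc.
  apply (proj1 (sle_aeval_conj_spf _ _ _ _) (sle_refl _ _)). auto.
Qed.

Definition remove_nth {X : Type} (i : nat) (l : list X) : list X :=
  firstn i l ++ skipn (S i) l.

Lemma length_remove_nth {X : Type} i (l : list X) :
  i < length l -> length (remove_nth i l) = length l - 1.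
Proof. intros Hi. unfold remove_nth. rewrite length_app, length_firstn, length_skipn. lia. Qed.

Lemma incl_remove_nth {X : Type} i (l : list X) : incl (remove_nth i l) l.
Proof.
  intros x. unfold remove_nth. rewrite in_app_iff. intros [Hx|Hx].
  - rewrite <- (firstn_skipn i l). apply in_or_app. left; exact Hx.
  - rewrite <- (firstn_skipn (S i) l). apply in_or_app. right; exact Hx.
Qed.

Lemma nth_in_remove_nth {X : Type} i j (l : list X) d :
  j < length l -> j <> i -> In (nth j l d) (remove_nth i l).
Proof.
  intros Hj Hji. unfold remove_nth. apply in_or_app. destruct (Nat.ltb_spec j i) as [Hlt|Hge].
  - left. replace (nth j l d) with (nth j (firstn i l) d).
    + apply nth_In. rewrite length_firstn. lia.
    + rewrite nth_firstn. destruct (Nat.ltb_spec j i); [reflexivity|lia].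
  - right. replace (nth j l d) with (nth (j - S i) (skipn (S i) l) d).
    + apply nth_In. rewrite length_skipn. lia.
    + rewrite nth_skipn. f_equal. lia.
Qed.

Fixpoint split_dia (F R : list clause) : list clause :=
  match R with
  | [] => [CDia F]
  | r :: R' =>
      CDia F :: flat_map (fun i => split_dia (remove_nth i F ++ [r]) R') (seq 0 (length F))
  end.

Definition dia_nf (n : nat) (L : list clause) : list clause :=
  split_dia (firstn n L) (skipn n L).

Lemma in_split_dia R : forall F c, In c (split_dia F R) ->
  exists l, c = CDia l /\ length l = length F /\ incl l (F ++ R).
Proof.
  induction R as [|r R IH]; intros F c Hc.
  - destruct Hc as [<-|[]]. exists F. rewrite app_nil_r. auto using incl_refl.
  - destruct Hc as [<-|Hc].
    + exists F. auto using incl_appl, incl_refl.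
    + apply in_flat_map in Hc as (i & Hi & Hc). apply in_seq in Hi.
      destruct (IH _ _ Hc) as (l & -> & Hlen & Hincl). exists l. split; [reflexivity|split].
      * rewrite Hlen, length_app, length_remove_nth by lia. simpl; lia.
      * intros x Hx. apply Hincl, in_app_iff in Hx as [Hx|Hx];
          [apply in_app_iff in Hx as [Hx|[<-|[]]]|].
        -- apply in_or_app; left. exact (incl_remove_nth _ _ _ Hx).
        -- apply in_or_app; right; left; reflexivity.
        -- apply in_or_app; right; right; exact Hx.
Qed.

Lemma dia_nf_normal n L :
  (forall c, In c L -> normal n c) -> forall c, In c (dia_nf n L) -> normal n c.
Proof.
  intros HL c Hc. apply in_split_dia in Hc as (l & -> & Hlen & Hincl).
  rewrite firstn_skipn in Hincl. constructor.
  - rewrite Hlen, length_firstn. lia.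
  - auto.
Qed.

Lemma ksat_dia_nf F V w n L :
  ksat F V w (Dia (conj_spf L)) -> forall c, In c (dia_nf n L) -> ksat F V w (clause_spf c).
Proof.
  intros (u & Hwu & Hu) c Hc. apply in_split_dia in Hc as (l & -> & _ & Hincl).
  rewrite firstn_skipn in Hincl. exists u. split; [exact Hwu|].
  exact (ksat_conj_spf_incl _ _ _ _ _ Hincl Hu).
Qed.

Section SplitDia.
Variables (A : SLO) (n : nat) (v : nat -> car A).
Hypothesis Hax : slo_valid A (iota_fun n).

(* Each step instantiates [iota_fun n] with p_j := the j-th clause of F (j < n) and
   p_n := the conjunction of R: the diamonds of the [Q_minus n i] are [CDia F] and
   diamonds of conjunctions one clause shorter than F ++ R, which are split recursively. *)
Lemma split_dia_sle R : forall F y, length F = n ->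
  (forall c, In c (split_dia F R) -> sle A y (aeval A v (clause_spf c))) ->
  sle A y (sdia A (aeval A v (conj_spf (F ++ R)))).
Proof.
  induction R as [|r R IH]; intros F y HF H.
  - rewrite app_nil_r. exact (H (CDia F) (or_introl eq_refl)).
  - set (piece j := if j <? n then [nth j F (CVar 0)] else r :: R).
    set (rest i := if i <? n then (remove_nth i F ++ [r]) ++ R else F).
    apply (iota_fun_sle_dia A n (fun j => aeval A v (conj_spf (piece j)))
                                (fun i => aeval A v (conj_spf (rest i)))); [exact Hax|..].
    + intros i Hi. unfold rest. destruct (Nat.ltb_spec i n).
      * apply IH.
        -- rewrite length_app, length_remove_nth by lia. simpl; lia.
        -- intros c Hc. apply H. right. apply in_flat_map. exists i.
           split; [apply in_seq; lia|exact Hc].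
      * exact (H (CDia F) (or_introl eq_refl)).
    + intros i j Hi Hj Hij. apply sle_conj_spf_incl. unfold piece, rest.
      intros c Hc. rewrite <- app_assoc.
      destruct (Nat.ltb_spec j n), (Nat.ltb_spec i n); try lia.
      * destruct Hc as [<-|[]]. apply in_or_app; left. apply nth_in_remove_nth; lia.
      * destruct Hc as [<-|[]]. apply nth_In. lia.
      * apply in_or_app; right. exact Hc.
    + intros u Hu. apply sle_aeval_conj_spf. intros c Hc.
      apply in_app_iff in Hc as [Hc|Hc].
      * destruct (In_nth _ _ (CVar 0) Hc) as (j & Hj & <-).
        specialize (Hu j ltac:(lia)). unfold piece in Hu.
        destruct (Nat.ltb_spec j n); [|lia].
        exact (proj1 (sle_aeval_conj_spf _ _ _ _) Hu _ (or_introl eq_refl)).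
      * specialize (Hu n (le_n n)). unfold piece in Hu. rewrite Nat.ltb_irrefl in Hu.
        exact (proj1 (sle_aeval_conj_spf _ _ _ _) Hu _ Hc).
Qed.

Lemma dia_nf_sle L y :
  (forall c, In c (dia_nf n L) -> sle A y (aeval A v (clause_spf c))) ->
  sle A y (sdia A (aeval A v (conj_spf L))).
Proof.
  unfold dia_nf. intros H. destruct (Nat.le_gt_cases (length L) n) as [Hle|Hgt].
  - rewrite firstn_all2, skipn_all2 in H by exact Hle. exact (H (CDia L) (or_introl eq_refl)).
  - rewrite <- (firstn_skipn n L). apply split_dia_sle; [|exact H].
    apply firstn_length_le. lia.
Qed.

End SplitDia.

Fixpoint nf (n : nat) (t : spf) : list clause :=
  match t with
  | Var k => [CVar k]
  | Top => []
  | And a b => nf n a ++ nf n b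
  | Dia a => dia_nf n (nf n a)
  end.

Lemma nf_normal n t : forall c, In c (nf n t) -> normal n c.
Proof.
  induction t as [k| |a IHa b IHb|a IHa]; simpl; intros c Hc.
  - destruct Hc as [<-|[]]. constructor.
  - destruct Hc.
  - apply in_app_iff in Hc as [Hc|Hc]; auto.
  - exact (dia_nf_normal n _ IHa c Hc).
Qed.

Lemma ksat_nf F V n t w :
  ksat F V w t -> forall c, In c (nf n t) -> ksat F V w (clause_spf c).
Proof.
  revert w. induction t as [k| |a IHa b IHb|a IHa]; simpl; intros w Hw c Hc.
  - destruct Hc as [<-|[]]. exact Hw.
  - destruct Hc.
  - destruct Hw as [Hwa Hwb]. apply in_app_iff in Hc as [Hc|Hc]; eauto.
  - destruct Hw as (u & Hwu & Hu). eapply ksat_dia_nf; [|exact Hc].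
    exists u. split; [exact Hwu|]. apply ksat_conj_spf. eauto.
Qed.

Lemma nf_sle A n v t y : slo_valid A (iota_fun n) ->
  (forall c, In c (nf n t) -> sle A y (aeval A v (clause_spf c))) -> sle A y (aeval A v t).
Proof.
  intros Hax. revert y. induction t as [k| |a IHa b IHb|a IHa]; simpl; intros y H.
  - exact (H (CVar k) (or_introl eq_refl)).
  - apply sle_top.
  - apply sle_meet. split; [apply IHa|apply IHb]; intros c Hc; apply H, in_app_iff; auto.
  - eapply sle_trans; [exact (dia_nf_sle A n v Hax _ _ H)|].
    apply sle_dia, IHa, sle_aeval_conj_spf, sle_refl.
Qed.

(* [None] is a reflexive world where every formula holds; as the only successor of
   [Some (CVar p)], it makes that world refute only formulas with a top-level conjunct p. *)
Definition canon_rel (n : nat) (w u : option clause) : Prop :=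
  match w with
  | Some (CDia l) => length l <= n /\ exists c, In c l /\ u = Some c
  | _ => u = None
  end.

Definition canon_frame (n : nat) : frame := {| world := option clause; rel := canon_rel n |}.

Definition canon_val (k : nat) (w : option clause) : Prop :=
  match w with
  | Some (CVar p) => k <> p
  | _ => True
  end.

Lemma canon_None_sat n f : ksat (canon_frame n) canon_val None f.
Proof. induction f; simpl; auto. exists None. split; [reflexivity|assumption]. Qed.

Lemma canon_refutes n c : normal n c -> ~ ksat (canon_frame n) canon_val (Some c) (clause_spf c).
Proof.
  induction 1 as [k|l Hlen Hl IH]; simpl.
  - auto.
  - intros (u & (_ & e & He & ->) & Hu). apply (IH e He).
    exact (proj1 (ksat_conj_spf _ _ _ _) Hu e He).
Qed.

Lemma canon_refuted_sle n (A : SLO) v g : forall c, normal n c ->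
  ~ ksat (canon_frame n) canon_val (Some c) g -> sle A (aeval A v g) (aeval A v (clause_spf c)).
Proof.
  induction g as [q| |a IHa b IHb|a IHa]; intros c Hc Hg; simpl in Hg.
  - destruct c as [k|l]; [|contradiction Hg; exact I].
    destruct (Nat.eq_dec q k) as [->|Hqk]; [apply sle_refl|contradiction].
  - contradiction Hg; exact I.
  - apply not_and_or in Hg as [Hg|Hg]; simpl.
    + eapply sle_trans; [apply sle_meet_l|exact (IHa c Hc Hg)].
    + eapply sle_trans; [apply sle_meet_r|exact (IHb c Hc Hg)].
  - destruct Hc as [k|l Hlen Hl].
    + contradiction Hg. exists None. split; [reflexivity|apply canon_None_sat].
    + simpl. apply sle_dia, sle_aeval_conj_spf. intros e He.
      apply IHa; [exact (Hl e He)|]. intros Hs. apply Hg.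
      exists (Some e). split; [split; [exact Hlen|eauto]|exact Hs].
Qed.

Lemma canon_valid n : 1 <= n -> frame_valid (canon_frame n) (iota_fun n).
Proof.
  intros Hn. apply frame_valid_iota_fun. intros [[k|l]|].
  - exists [None]. split; [simpl; lia|]. intros u Hu. left. symmetry. exact Hu.
  - destruct (Nat.le_gt_cases (length l) n) as [Hle|Hgt].
    + exists (map Some l). rewrite length_map. split; [exact Hle|].
      intros u (_ & c & Hc & ->). apply in_map. exact Hc.
    + exists []. split; [simpl; lia|]. intros u [Hle _]. lia.
  - exists [None]. split; [simpl; lia|]. intros u Hu. left. symmetry. exact Hu.
Qed.

Lemma Kr_conseq_iota_fun_SLO_conseq n i : 1 <= n ->
  Kr_conseq (fun s => s = iota_fun n) i -> SLO_conseq (fun s => s = iota_fun n) i.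
Proof.
  intros Hn HK A HA v.
  assert (Hax : slo_valid A (iota_fun n)) by (apply HA; reflexivity).
  assert (Hcanon : frame_valid (canon_frame n) i) by (apply HK; intros s ->; apply canon_valid, Hn).
  apply (nf_sle A n v _ _ Hax). intros c Hc.
  assert (Hnormal := nf_normal n _ c Hc).
  apply (canon_refuted_sle n A v _ c Hnormal). intros Hante.
  apply (canon_refutes n c Hnormal).
  exact (ksat_nf _ _ n _ _ (Hcanon canon_val (Some c) Hante) c Hc).
Qed.

Definition complex_algebra (F : frame) : SLO.
Proof.
  refine {| car := world F -> Prop;
            meet X Y w := X w /\ Y w;
            stop _ := True;
            sdia X w := exists u, rel F w u /\ X u |}.
  1-4: intros; apply functional_extensionality; intros w;
       apply propositional_extensionality; tauto.
  intros X Y HXY. apply functional_extensionality; intros w.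
  apply propositional_extensionality. split; [tauto|].
  intros (u & Hwu & Hu). split; [eauto|].
  exists u. split; [exact Hwu|]. rewrite <- HXY in Hu. tauto.
Defined.

Lemma aeval_complex_algebra F V t w :
  aeval (complex_algebra F) V t w <-> ksat F V w t.
Proof.
  revert w. induction t as [k| |a IHa b IHb|a IHa]; intros w; simpl.
  - reflexivity.
  - reflexivity.
  - rewrite IHa, IHb. reflexivity.
  - setoid_rewrite IHa. reflexivity.
Qed.

Lemma sle_complex_algebra F (X Y : car (complex_algebra F)) :
  sle (complex_algebra F) X Y <-> (forall w, X w -> Y w).
Proof.
  unfold sle. simpl. split.
  - intros H w Hx. rewrite <- H in Hx. tauto.
  - intros H. apply functional_extensionality. intros w.
    apply propositional_extensionality. firstorder.
Qed.

Lemma slo_valid_complex_algebra F i : slo_valid (complex_algebra F) i <-> frame_valid F i.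
Proof.
  unfold slo_valid, frame_valid. setoid_rewrite sle_complex_algebra.
  setoid_rewrite aeval_complex_algebra. reflexivity.
Qed.

Lemma SLO_conseq_Kr_conseq Sigma i : SLO_conseq Sigma i -> Kr_conseq Sigma i.
Proof.
  intros HS F HF. apply slo_valid_complex_algebra, HS.
  intros s Hs. apply slo_valid_complex_algebra, HF, Hs.
Qed.

Theorem theorem7p3 :
  forall n : nat, 1 <= n -> spi_complete (fun s => s = iota_fun n).
Proof.
  intros n Hn i. split.
  - apply Kr_conseq_iota_fun_SLO_conseq, Hn.
  - apply SLO_conseq_Kr_conseq.
Qed.
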